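(* Let $R$ be a ring with unity and involution $*$, let $a\in R$ and let $m$ be a nonnegative integer. Then $a$ is left dual core invertible if and only if $a$ is left dual $a^m$-core invertible.
   Context: Here $a^0=1$. An element $a$ is left dual core invertible if there exists $x\in R$ with $axa=a$, $(xa)^*=xa$ and $x^2a=x$. For $v\in R$, $a$ is left dual $v$-core invertible if there exists $x\in R$ with $axva=a$, $(xva)^*=xva$ and $x^2va=x$. *)

From mathcomp Require Import all_boot all_algebra.
Set Implicit Arguments. Unset Strict Implicit. Unset Printing Implicit Defensive.
Import GRing.Theory.
Local Open Scope ring_scope.

Definition is_involution (R : pzRingType) (star : R -> R) : Prop :=
  (forall a b : R, star (a + b) = star a + star b) /\
  (forall a b : R, star (a * b) = star b * star a) /\
  (forall a : R, star (star a) = a).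

Definition left_dual_core_invertible (R : pzRingType) (star : R -> R) (a : R) : Prop :=
  exists x : R, a * x * a = a /\ star (x * a) = x * a /\ x ^+ 2 * a = x.

Definition left_dual_v_core_invertible (R : pzRingType) (star : R -> R) (v a : R) : Prop :=
  exists x : R, a * x * v * a = a /\ star (x * v * a) = x * v * a
                /\ x ^+ 2 * v * a = x.

From mathcomp Require Import all_boot all_algebra.
Local Open Scope ring_scope.
Import GRing.Theory.

(* If x is a left dual core inverse of a, then x * (x * a) = x gives
   x^(k+1) a^(k+1) = x a, so x^(m+1) is a left dual a^m-core inverse with the
   same projection x a.  Conversely, if y is a left dual a^m-core inverse, then
   y a^m is a left dual core inverse: the only nontrivial identity is
   a^m y a^m a = a^m, which follows from a y a^m a = a when m > 0 (for m = 0 the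
   two definitions coincide). *)

Section LeftDualCore.

Variables (R : pzRingType) (star : R -> R).

Lemma mul_mulr_sqr (x a : R) : x ^+ 2 * a = x -> x * (x * a) = x.
Proof. by rewrite mulrA -expr2. Qed.

Lemma exprS_mul_exprS (x a : R) (k : nat) :
  x ^+ 2 * a = x -> x ^+ k.+1 * a ^+ k.+1 = x * a.
Proof.
move=> x2a; elim: k => [|k IHk]; first by rewrite !expr1.
have -> : x ^+ k.+2 = x ^+ k * x ^+ 2 by rewrite -exprD addn2.
by rewrite [a ^+ k.+2]exprS mulrA -(mulrA (x ^+ k)) x2a -exprSr.
Qed.

Lemma exprS_mul_inner (a y v : R) (k : nat) :
  a * y * v * a = a -> a ^+ k.+1 * y * v * a = a ^+ k.+1.
Proof. by move=> ayva; rewrite exprSr -!mulrA (mulrA a y) (mulrA (a * y)) ayva. Qed.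

Lemma left_dual_core_expr_core (a : R) (m : nat) :
  left_dual_core_invertible star a -> left_dual_v_core_invertible star (a ^+ m) a.
Proof.
case=> x [axa [selfadj x2a]]; exists (x ^+ m.+1).
have proj : x ^+ m.+1 * a ^+ m * a = x * a.
  by rewrite -mulrA -exprSr exprS_mul_exprS.
split; first by rewrite -!mulrA (mulrA _ _ a) proj mulrA.
split; first by rewrite proj.
by rewrite expr2 -!mulrA (mulrA _ _ a) proj exprSr -mulrA mul_mulr_sqr.
Qed.

Lemma left_dual_expr_core_core (a : R) (m : nat) :
  left_dual_v_core_invertible star (a ^+ m) a -> left_dual_core_invertible star a.
Proof.
case=> y [ayva [selfadj y2va]]; exists (y * a ^+ m).
split; first by rewrite mulrA.
split; first by [].
case: m ayva selfadj y2va => [|k] ayva _ y2va; first by rewrite expr0 !mulr1 in y2va *.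
by rewrite expr2 -!mulrA (mulrA (a ^+ k.+1)) (mulrA (a ^+ k.+1 * y)) exprS_mul_inner.
Qed.

End LeftDualCore.

Theorem corollary3p5 (R : pzRingType) (star : R -> R) (a : R) (m : nat) :
  is_involution star ->
  (left_dual_core_invertible star a <-> left_dual_v_core_invertible star (a ^+ m) a).
Proof.
move=> _; split; [exact: left_dual_core_expr_core | exact: left_dual_expr_core_core].
Qed.
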